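(* Let $n\geq1$ and let $G_n$ be the connected anti-regular graph with loops on $n$ vertices. The eigenvalues $\lambda_1,\ldots,\lambda_n$ of the adjacency matrix $A(G_n)$ are $$\lambda_j=\frac{(-1)^{n+1}}{2\cos\left(\frac{2j-1}{2n+1}\pi\right)},\qquad j=1,2,\ldots,n.$$ Consequently, all eigenvalues of $A(G_n)$ are simple.
   Context: A graph with loops is a pair $(V,E)$ with $E$ a set of 2-element multisets of $V$ (loops allowed, at most one per vertex, no multiple edges); the degree of a vertex counts a loop once. An anti-regular graph with loops is one in which all vertex degrees are distinct; for each $n\ge1$ there is, up to isomorphism, a unique connected one on $n$ vertices, denoted $G_n$, with degree sequence $(1,2,\ldots,n)$. Equivalently, $A(G_n)$ is permutation similar to the $n\times n$ matrix with $(i,j)$ entry $1$ if $i+j\ge n+1$ and $0$ otherwise. The adjacency matrix has diagonal entry $1$ exactly at vertices with a loop. *)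

From HB Require Import structures.
From mathcomp Require Import all_boot all_order all_algebra all_field.
Set Implicit Arguments. Unset Strict Implicit. Unset Printing Implicit Defensive.
Import Order.TTheory GRing.Theory Num.Theory.
Local Open Scope ring_scope.

(* Adjacency matrix of G_n (up to permutation similarity): with 0-based
   indices i, j < n, entry 1 iff (i+1)+(j+1) >= n+1, i.e. i + j + 1 >= n. *)
Definition antireg_adj (n : nat) : 'M[algC]_n :=
  \matrix_(i < n, j < n) (if (n <= i + j + 1)%N then 1 else 0).

(* cos (k * pi / m) for m >= 1:  m.-root (-1) is e^{i pi / m}
   (the m-th root of -1 of least nonnegative argument), so its k-th power is
   e^{i k pi / m}, whose real part is cos (k pi / m). *)
Definition cos_pi_frac (k m : nat) : algC := 'Re ((m.-root (-1)) ^+ k).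

Definition antireg_eig (n j : nat) : algC :=
  (-1) ^+ n.+1 / (2 * cos_pi_frac (2 * j - 1) (2 * n + 1)).

From HB Require Import structures.
From mathcomp Require Import all_boot all_order all_algebra all_field.
From mathcomp Require Import ring lra zify.
Import Order.TTheory GRing.Theory Num.Theory.
Local Open Scope ring_scope.
Set Implicit Arguments. Unset Strict Implicit. Unset Printing Implicit Defensive.

(* Write m = 2n+1 and z = e^(i pi / m).  For s^m = -1 the column sums of the
   anti-regular matrix telescope, so x_k = s^k + s^(2n-1-k) is a left
   eigenvector of A(G_n) for the eigenvalue (s^n (1 - s))^-1.  With
   s = -w^2 and w = z^(2j-1) this scalar is (-1)^(n+1) (w + conj w), that is
   1 / lambda_j.  The n values lambda_j are distinct, hence they are the whole
   spectrum, each with multiplicity one.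

   Distinctness says that m.-root (-1), the root of X^m + 1 of largest real
   part in the closed upper half-plane, really is e^(i pi / m), i.e. that the
   real parts of z, z^2, ..., z^m decrease strictly.  Multiplying by z lowers
   the real part as long as one stays in the upper half-plane.  If a power z^e
   with 0 < e < m left the open upper half-plane, either z would factor as
   y1 * y2 with y1, y2 in the open upper half-plane and one of them a root of
   X^m + 1 with larger real part than z, or z^e = -1 and the powers of z would
   exhaust all roots of X^m + 1, which is impossible as these include a
   primitive 2m-th root of unity. *)

Section UnitCircle.
Variable R : realFieldType.
Implicit Types a b c s : R.

Lemma rot_Re_lt a b c s :
  a ^+ 2 + b ^+ 2 = 1 -> c ^+ 2 + s ^+ 2 = 1 -> 0 <= b -> 0 < c -> 0 < s ->
  0 <= s * a + c * b -> c * a - s * b < a.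
Proof.
move=> ab1 cs1 b_ge0 c_gt0 s_gt0 im_ge0.
have c_lt1 : c < 1 by nra.
have [a_gt0|a_le0] := ltrP 0 a; first nra.
have [a0|a_neq0] := eqVneq a 0; first by subst a; nra.
have a_lt0 : a < 0 by rewrite lt_neqAle a_neq0 a_le0.
nra.
Qed.

Lemma mul_Re_lt (a1 b1 a2 b2 : R) :
  a1 ^+ 2 + b1 ^+ 2 = 1 -> a2 ^+ 2 + b2 ^+ 2 = 1 -> 0 < b1 -> 0 < b2 ->
  0 < a1 * a2 - b1 * b2 -> 0 < a1 * b2 + b1 * a2 -> a1 * a2 - b1 * b2 < a1.
Proof.
move=> ab1 ab2 b1_gt0 b2_gt0 re_gt0 im_gt0.
have [a1_le0|a1_gt0] := lerP a1 0.
  have a12_gt0 : 0 < a1 * a2 by nra.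
  nra.
have a2_le1 : a2 <= 1 by nra.
nra.
Qed.

Lemma cross_gt0 a b (a2 b2 : R) :
  a ^+ 2 + b ^+ 2 = 1 -> a2 ^+ 2 + b2 ^+ 2 = 1 -> 0 <= b -> 0 <= b2 ->
  0 < b + b2 -> a2 < a -> 0 < b2 * a - a2 * b.
Proof.
move=> ab1 ab2 b_ge0 b2_ge0 bb_gt0 lt_a.
have [a2_ge0|a2_lt0] := lerP 0 a2.
  have b_lt : b < b2 by rewrite ltNge; apply/negP => ?; nra.
  nra.
have [a_lt0|a_ge0] := ltrP a 0.
  have b2_lt : b2 < b by rewrite ltNge; apply/negP => ?; nra.
  nra.
have [b0|b_neq0] := eqVneq b 0; first by subst b; nra.
have [a0|a_neq0] := eqVneq a 0; first by subst a; nra.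
have b_gt0 : 0 < b by rewrite lt_neqAle eq_sym b_neq0 b_ge0.
have a_gt0 : 0 < a by rewrite lt_neqAle eq_sym a_neq0 a_ge0.
nra.
Qed.

End UnitCircle.

(* Real and imaginary parts as elements of the real closed field algR,
   where nra is available. *)
Definition reR (x : algC) : algR := in_algR (Creal_Re x).
Definition imR (x : algC) : algR := in_algR (Creal_Im x).

Lemma reR_imR_norm1 (x : algC) : `|x| = 1 -> reR x ^+ 2 + imR x ^+ 2 = 1.
Proof.
by move=> x1; apply: val_inj => /=; rewrite -!expr2 -normC2_Re_Im x1 expr1n.
Qed.

Lemma reRM (x y : algC) : reR (x * y) = reR x * reR y - imR x * imR y.
Proof. by apply: val_inj => /=; rewrite ReM. Qed.

Lemma imRM (x y : algC) : imR (x * y) = reR x * imR y + reR y * imR x.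
Proof. by apply: val_inj => /=; rewrite ImM. Qed.

Lemma reRJ (x : algC) : reR x^* = reR x.
Proof. by apply: val_inj => /=; rewrite Re_conj. Qed.

Lemma imRJ (x : algC) : imR x^* = - imR x.
Proof. by apply: val_inj => /=; rewrite Im_conj. Qed.

Lemma reRN (x : algC) : reR (- x) = - reR x.
Proof. by apply: val_inj => /=; rewrite raddfN. Qed.

Lemma imRN (x : algC) : imR (- x) = - imR x.
Proof. by apply: val_inj => /=; rewrite raddfN. Qed.

Lemma reR1 : reR 1 = 1.
Proof. by apply: val_inj => /=; rewrite (Creal_ReP _ _). Qed.

Lemma imR1 : imR 1 = 0.
Proof. by apply: val_inj => /=; apply/Creal_ImP. Qed.

Lemma imR_eq0_reR (x : algC) : imR x = 0 -> x = val (reR x).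
Proof. by move=> /(congr1 val) /= Im0; rewrite [LHS]Crect Im0 mulr0 addr0. Qed.

Lemma Re_mul_rot_lt (x q : algC) : `|x| = 1 -> `|q| = 1 ->
  0 <= imR x -> 0 < reR q -> 0 < imR q -> 0 <= imR (x * q) -> reR (x * q) < reR x.
Proof.
move=> x1 q1 Imx_ge0 Req_gt0 Imq_gt0; rewrite imRM reRM => Imxq_ge0.
rewrite [reR x * _]mulrC [imR x * _]mulrC.
apply: (rot_Re_lt (reR_imR_norm1 x1) (reR_imR_norm1 q1)) => //.
by rewrite [imR q * _]mulrC.
Qed.

Lemma Re_mul_lt (u v : algC) : `|u| = 1 -> `|v| = 1 -> 0 < imR u -> 0 < imR v ->
  0 < reR (u * v) -> 0 < imR (u * v) -> reR (u * v) < reR u.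
Proof.
move=> u1 v1 Imu_gt0 Imv_gt0; rewrite reRM imRM => Re_gt0 Im_gt0.
apply: mul_Re_lt (reR_imR_norm1 u1) (reR_imR_norm1 v1) Imu_gt0 Imv_gt0 Re_gt0 _.
by rewrite [imR u * _]mulrC.
Qed.

Lemma Im_mul_conj_gt0 (v w : algC) : `|v| = 1 -> `|w| = 1 ->
  0 <= imR v -> 0 <= imR w -> 0 < imR v + imR w -> reR w < reR v ->
  0 < imR (w * v^*).
Proof.
move=> v1 w1 Imv_ge0 Imw_ge0 Im_gt0 lt_Re; rewrite imRM reRJ imRJ.
have := cross_gt0 (reR_imR_norm1 v1) (reR_imR_norm1 w1) Imv_ge0 Imw_ge0 Im_gt0 lt_Re.
by rewrite mulrN [reR v * _]mulrC addrC.
Qed.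

Section RootN1.
Variable m : nat.
Hypotheses (m_odd : odd m) (m_gt1 : (1 < m)%N).
Let m_gt0 : (0 < m)%N := ltnW m_gt1.
Local Notation z := (m.-root (-1 : algC)).

Lemma rootN1K : z ^+ m = -1.
Proof. exact: rootCK. Qed.

Lemma expN1_odd : (-1 : algC) ^+ m = -1.
Proof. by rewrite -signr_odd m_odd. Qed.

Lemma norm_rootN1 (y : algC) : y ^+ m = -1 -> `|y| = 1.
Proof.
move=> ym; apply/eqP; rewrite -(pexpr_eq1 m_gt0) ?normr_ge0 //.
by rewrite -normrX ym normrN normr1.
Qed.

Lemma Re_rootN1_max (y : algC) : y ^+ m = -1 -> reR y <= reR z.
Proof.
move=> ym; have [Imy_ge0|Imy_lt0] := lerP 0 (imR y).
  exact: (rootC_Re_max m_gt0 ym Imy_ge0).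
rewrite -reRJ; apply: (rootC_Re_max m_gt0); first by rewrite -rmorphXn ym rmorphN1.
by change (0 <= imR y^*); rewrite imRJ oppr_ge0 ltW.
Qed.

Lemma prim_rootN1_exists :
  exists2 p : algC, (m.*2).-primitive_root p & p ^+ m = -1.
Proof.
have m2_gt0 : (0 < m.*2)%N by rewrite double_gt0.
have [p p_prim] := C_prim_root_exists m2_gt0; exists p => //.
have /eqP := prim_expr_order p_prim; rewrite -muln2 exprM sqrf_eq1.
case/orP=> /eqP // pm1.
have : (m.*2 %| m)%N by rewrite (prim_order_dvd p_prim) pm1.
by move/(dvdn_leq m_gt0); lia.
Qed.

Lemma Re_rootN1_gt0 : 0 < reR z.
Proof.
have [p p_prim pm] := prim_rootN1_exists.
have odd_powN1 k : (p ^+ k.*2.+1) ^+ m = -1.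
  by rewrite exprAC pm -signr_odd /= odd_double.
have p2_neq1 : p ^+ 2 != 1.
  by rewrite -(prim_order_dvd p_prim); apply/negP => /(@dvdn_leq _ 2 isT); lia.
have sum0 : \sum_(k < m) p ^+ k.*2.+1 = 0.
  have : (p ^+ 2 - 1) * \sum_(k < m) (p ^+ 2) ^+ k = 0.
    by rewrite -subrX1 -exprM mul2n (prim_expr_order p_prim) subrr.
  move/eqP; rewrite mulf_eq0 subr_eq0 (negPf p2_neq1) /= => /eqP geo0.
  rewrite -[RHS](mulr0 p) -[in RHS]geo0 mulr_sumr.
  apply: eq_bigr => k _.
  by rewrite -exprM -exprS mul2n.
(* The roots p^(2k+1) of X^m + 1 sum to 0 and include -1, so some has positive
   real part. *)
have sumRe0 : \sum_(k < m) reR (p ^+ k.*2.+1) = 0.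
  by apply: val_inj => /=; rewrite raddf_sum /= -raddf_sum sum0 raddf0.
have half_lt : (m./2 < m)%N by rewrite -divn2 ltn_Pdiv.
have half_odd : (m./2).*2.+1 = m by rewrite -[RHS](odd_double_half m) m_odd add1n.
rewrite (bigD1 (Ordinal half_lt)) //= half_odd pm reRN reR1 in sumRe0.
rewrite ltNge; apply/negP => Rez_le0.
have rest_le0 : \sum_(k < m | k != Ordinal half_lt) reR (p ^+ k.*2.+1) <= 0.
  by apply: sumr_le0 => k _; apply: le_trans (Re_rootN1_max (odd_powN1 k)) Rez_le0.
suff : (0 : algR) < 0 by rewrite ltxx.
lra.
Qed.

Lemma Im_rootN1_gt0 : 0 < imR z.
Proof.
have Imz_ge0 : 0 <= imR z by exact: Im_rootC_ge0.
rewrite lt_neqAle Imz_ge0 andbT; apply/negP => /eqP Imz0.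
have Rez1 : reR z = 1.
  have := reR_imR_norm1 (norm_rootN1 rootN1K); rewrite -Imz0 => z1.
  have := Re_rootN1_gt0; nra.
move: rootN1K; rewrite (imR_eq0_reR (esym Imz0)) Rez1 expr1n => /eqP.
by rewrite -subr_eq0 opprK gt_eqF // addr_gt0 ?ltr01.
Qed.

Lemma norm_rootN1X j : `|z ^+ j| = 1.
Proof. by rewrite normrX (norm_rootN1 rootN1K) expr1n. Qed.

Lemma rootN1X_2m j : (z ^+ j) ^+ m.*2 = 1.
Proof. by rewrite exprAC -muln2 exprM rootN1K sqrrN !expr1n. Qed.

Lemma rootN1_nosplit (y1 y2 : algC) : y1 ^+ m.*2 = 1 ->
  0 < imR y1 -> 0 < imR y2 -> y1 * y2 = z -> False.
Proof.
move=> y1_2m Imy1_gt0 Imy2_gt0 y12.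
have m2_gt0 : (0 < m.*2)%N by rewrite double_gt0.
have y1_1 : `|y1| = 1.
  by apply/eqP; rewrite -(pexpr_eq1 m2_gt0) // -normrX y1_2m normr1.
have y2_1 : `|y2| = 1.
  by have := norm_rootN1 rootN1K; rewrite -y12 normrM y1_1 mul1r.
have Rez_gt0 := Re_rootN1_gt0; have Imz_gt0 := Im_rootN1_gt0.
have lt1 : reR z < reR y1 by rewrite -y12; apply: Re_mul_lt; rewrite ?y12.
have lt2 : reR z < reR y2.
  by rewrite -y12 mulrC; apply: Re_mul_lt; rewrite // mulrC y12.
have : (y1 ^+ m) ^+ 2 == 1 by rewrite -exprM muln2 y1_2m.
rewrite sqrf_eq1 => /orP[] /eqP y1m.
- have : y2 ^+ m = -1 by move: rootN1K; rewrite -y12 exprMn y1m mul1r.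
  by move/Re_rootN1_max; rewrite leNgt lt2.
- by move: (Re_rootN1_max y1m); rewrite leNgt lt1.
Qed.

Lemma Re_rootN1X_decr k : (forall i, (i <= k)%N -> 0 <= imR (z ^+ i)) ->
  forall j l, (j < l <= k)%N -> reR (z ^+ l) < reR (z ^+ j).
Proof.
move=> Im_ge0 j l /andP[]; elim: l => [//|l IHl] jl lk.
have step : reR (z ^+ l.+1) < reR (z ^+ l).
  rewrite exprSr; apply: (Re_mul_rot_lt (norm_rootN1X l) (norm_rootN1 rootN1K)).
  - by apply: Im_ge0; rewrite ltnW.
  - exact: Re_rootN1_gt0.
  - exact: Im_rootN1_gt0.
  - by rewrite -exprSr; apply: Im_ge0.
case: (ltngtP j l) => [jl'|lj|->].
- exact: lt_trans step (IHl jl' (ltnW lk)).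
- lia.
- exact: step.
Qed.

Lemma upper_rootN1_pow e : z ^+ e = -1 ->
    (forall j, (0 < j < e)%N -> 0 < imR (z ^+ j)) ->
  forall y, y ^+ m = -1 -> 0 <= imR y -> exists2 i, (i <= e)%N & y = z ^+ i.
Proof.
move=> ze Im_gt0 y ym Imy_ge0.
have Im_ge0 i : (i <= e)%N -> 0 <= imR (z ^+ i).
  move=> ie; case: (posnP i) => [->|i_gt0]; first by rewrite expr0 imR1.
  case: (ltngtP i e) => [i_lt|e_lt|->].
  - by apply/ltW/Im_gt0; rewrite i_gt0 i_lt.
  - lia.
  - by rewrite ze imRN imR1 oppr0.
have y1 := reR_imR_norm1 (norm_rootN1 ym).
pose P i := (i <= e)%N && (reR y <= reR (z ^+ i)).
have exP : exists i, P i by exists 0%N; rewrite /P expr0 reR1 /=; nra.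
have ubP i : P i -> (i <= e)%N by case/andP.
case: (ex_maxnP exP ubP) => i /andP[ie Rey_le] i_max.
case: (ltnP i e) => [i_lt|e_le].
  have Rey_gt : reR (z ^+ i.+1) < reR y.
    rewrite ltNge; apply/negP => Rey_le'.
    by have := i_max i.+1; rewrite /P i_lt Rey_le' => /(_ isT); rewrite ltnn.
  have [Rey_eq|Rey_neq] := eqVneq (reR y) (reR (z ^+ i)).
    exists i => //; apply: eqC_semipolar.
    - by rewrite norm_rootN1X (norm_rootN1 ym).
    - by move/(congr1 val): Rey_eq.
    - by apply: mulr_ge0; [exact: Imy_ge0 | exact: Im_ge0 (ltnW i_lt)].
  have Rey_lt : reR y < reR (z ^+ i) by rewrite lt_neqAle Rey_neq Rey_le.
  have zi := reR_imR_norm1 (norm_rootN1X i).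
  have zi1 := reR_imR_norm1 (norm_rootN1X i.+1).
  have Imy_gt0 : 0 < imR y.
    rewrite lt_neqAle Imy_ge0 andbT; apply/negP => /eqP Imy0.
    suff : (1 : algR) < 1 by rewrite ltxx.
    have Rezi1_geN1 : -1 <= reR (z ^+ i.+1) by nra.
    have Rezi_le1 : reR (z ^+ i) <= 1 by nra.
    by rewrite -Imy0 in y1; nra.
  have Imzi := Im_ge0 i (ltnW i_lt); have Imzi1 := Im_ge0 i.+1 i_lt.
  exfalso; apply: (@rootN1_nosplit (y * (z ^+ i)^*) (z ^+ i.+1 * y^*)).
  - rewrite exprMn -rmorphXn rootN1X_2m rmorph1 mulr1.
    by rewrite -muln2 exprM ym sqrrN expr1n.
  - apply: Im_mul_conj_gt0 (norm_rootN1X i) (norm_rootN1 ym) _ _ _ Rey_lt => //.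
    lra.
  - apply: Im_mul_conj_gt0 (norm_rootN1 ym) (norm_rootN1X i.+1) _ _ _ Rey_gt => //.
    lra.
  - have -> : y * (z ^+ i)^* * (z ^+ i.+1 * y^*) = (y^* * y) * ((z ^+ i)^* * z ^+ i) * z.
      by rewrite exprSr; ring.
    by rewrite -!normCKC norm_rootN1X (norm_rootN1 ym) expr1n !mul1r.
have i_e : i = e by apply/eqP; rewrite eqn_leq ie e_le.
move: Rey_le; rewrite i_e ze reRN reR1 => Rey_le.
have Imy0 : imR y = 0 by nra.
have Rey : reR y = -1 by nra.
by exists e; rewrite // ze (imR_eq0_reR Imy0) Rey.
Qed.

Lemma rootN1X_neqN1 e : (0 < e < m)%N ->
  (forall j, (0 < j < e)%N -> 0 < imR (z ^+ j)) -> z ^+ e != -1.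
Proof.
move=> /andP[e_gt0 e_lt] Im_gt0; apply/eqP => ze.
have upper (y : algC) : y ^+ m = -1 -> 0 <= imR y -> y ^+ e.*2 = 1.
  move=> ym Imy; have [i _ ->] := upper_rootN1_pow ze Im_gt0 ym Imy.
  by rewrite exprAC -muln2 exprM ze sqrrN !expr1n.
have root_2e (y : algC) : y ^+ m = -1 -> y ^+ e.*2 = 1.
  move=> ym; have [Imy|Imy] := lerP 0 (imR y); first exact: upper.
  have := upper y^*; rewrite -!rmorphXn ym rmorphN1 imRJ oppr_ge0 => /(_ erefl).
  by move=> /(_ (ltW Imy)) /(congr1 Num.conj); rewrite conjCK rmorph1.
have [p p_prim pm] := prim_rootN1_exists.
have : (m.*2 %| e.*2)%N by rewrite (prim_order_dvd p_prim) root_2e.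
have e2_gt0 : (0 < e.*2)%N by rewrite double_gt0.
by move/(dvdn_leq e2_gt0); lia.
Qed.

Lemma Im_rootN1X_gt0 j : (0 < j < m)%N -> 0 < imR (z ^+ j).
Proof.
move=> j_bound; rewrite ltNge; apply/negP => Imzj_le0.
pose P e := (0 < e < m)%N && (imR (z ^+ e) <= 0).
have exP : exists e, P e by exists j; rewrite /P j_bound Imzj_le0.
case: (ex_minnP exP) => e /andP[e_bound Imze_le0] e_min.
have Im_gt0 i : (0 < i < e)%N -> 0 < imR (z ^+ i).
  move=> i_bound; rewrite ltNge; apply/negP => Imzi_le0.
  have : (e <= i)%N by apply: e_min; rewrite /P Imzi_le0 andbT; lia.
  lia.
have e_neq1 : e != 1%N.
  by apply: contraTneq Imze_le0 => ->; rewrite expr1 -ltNge Im_rootN1_gt0.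
set x := z ^+ e.-1.
have ze : z ^+ e = x * z by rewrite -exprSr prednK //; lia.
have x1 : `|x| = 1 := norm_rootN1X e.-1.
have Imx_gt0 : 0 < imR x by apply: Im_gt0; lia.
have x2m : x ^+ m.*2 = 1 := rootN1X_2m e.-1.
clearbody x.
have [Imze_lt0|Imze_ge0] := ltrP (imR (z ^+ e)) 0.
  apply: (@rootN1_nosplit (- x^*) (- (x * z))).
  - by rewrite -mul2n exprM sqrrN -exprM mul2n -rmorphXn x2m rmorph1.
  - by rewrite imRN imRJ opprK.
  - by rewrite imRN -ze oppr_gt0.
  - by rewrite mulrNN mulrA -normCKC x1 expr1n mul1r.
have Imze0 : imR (z ^+ e) = 0 by apply/eqP; rewrite eq_le Imze_le0 Imze_ge0.
have : reR (z ^+ e) < reR x.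
  rewrite ze; apply: (Re_mul_rot_lt x1 (norm_rootN1 rootN1K)) (ltW Imx_gt0) _ _ _.
  - exact: Re_rootN1_gt0.
  - exact: Im_rootN1_gt0.
  - by rewrite -ze Imze0.
have := reR_imR_norm1 x1; have := reR_imR_norm1 (norm_rootN1X e).
rewrite Imze0 expr0n addr0 => ze1 xn Reze_lt.
have Rex_le1 : reR x <= 1 by nra.
have Reze_lt1 : reR (z ^+ e) < 1 by lra.
have Reze : reR (z ^+ e) = -1 by apply/eqP; rewrite eq_le; apply/andP; split; nra.
have /negP := rootN1X_neqN1 e_bound Im_gt0; apply.
by rewrite (imR_eq0_reR Imze0) Reze /=.
Qed.

Lemma Re_rootN1X_lt j l : (j < l <= m)%N -> reR (z ^+ l) < reR (z ^+ j).
Proof.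
apply: Re_rootN1X_decr => i im.
case: (posnP i) => [->|i_gt0]; first by rewrite expr0 imR1.
case: (ltngtP i m) => [i_lt|m_lt|->].
- by apply/ltW/Im_rootN1X_gt0; rewrite i_gt0 i_lt.
- lia.
- by rewrite rootN1K imRN imR1 oppr0.
Qed.
End RootN1.

Section DistinctRoots.
Variables (F : fieldType) (n : nat) (f : 'I_n -> F).
Hypothesis f_inj : injective f.

Let prod_map_XsubC :
  \prod_(j < n) ('X - (f j)%:P) = \prod_(x <- map f (index_enum 'I_n)) ('X - x%:P).
Proof. by rewrite big_map. Qed.

Let uniq_map_f : uniq (map f (index_enum 'I_n)).
Proof. by rewrite map_inj_uniq ?index_enum_uniq. Qed.

Lemma char_poly_inj_eigen (A : 'M[F]_n) : (forall j, eigenvalue A (f j)) ->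
  char_poly A = \prod_(j < n) ('X - (f j)%:P).
Proof.
move=> eigA; rewrite prod_map_XsubC.
have roots : all (root (char_poly A)) (map f (index_enum 'I_n)).
  by apply/allP => _ /mapP[j _ ->]; rewrite -eigenvalue_root_char.
have := uniq_roots_dvdp roots; rewrite uniq_rootsE => /(_ uniq_map_f) dvd.
apply/eqP; rewrite -eqp_monic ?char_poly_monic ?monic_prod_XsubC //.
rewrite eqp_sym -dvdp_size_eqp // size_char_poly size_prod_XsubC size_map.
by rewrite /index_enum unlock -enumT size_enum_ord.
Qed.

Lemma mup_prod_inj_XsubC j : mup (f j) (\prod_(i < n) ('X - (f i)%:P)) = 1%N.
Proof.
rewrite prod_map_XsubC mu_prod_XsubC count_uniq_mem //.
by rewrite map_f // mem_index_enum.
Qed.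

End DistinctRoots.

Definition antireg_vec n (s : algC) : 'rV[algC]_n :=
  \row_k (s ^+ k + s ^+ ((2 * n).-1 - k)).

Definition antireg_scale n (s : algC) : algC := s ^+ n * (1 - s).

Lemma antireg_col_sum n (x : nat -> algC) (i : 'I_n) :
  \sum_(k < n) x k * antireg_adj n k i = \sum_(n - 1 - i <= k < n) x k.
Proof.
have i_lt := ltn_ord i.
under eq_bigr do rewrite mxE.
rewrite -(big_mkord xpredT (fun k => x k * (if (n <= k + i + 1)%N then 1 else 0))).
rewrite (@big_cat_nat _ _ _ (n - 1 - i)) /=; [|lia|lia].
rewrite big_nat_cond big1 ?add0r; last first.
  by move=> k /andP[/andP[_ k_lt] _]; rewrite ifF ?mulr0 //; apply/negbTE; lia.
by apply: eq_big_nat => k k_bound; rewrite ifT ?mulr1 //; lia.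
Qed.

Lemma antireg_vecP n s : s ^+ (2 * n + 1) = -1 ->
  antireg_scale n s *: (antireg_vec n s *m antireg_adj n) = antireg_vec n s.
Proof.
move=> s_pow; apply/rowP => i; rewrite !mxE.
under eq_bigr => k _ do rewrite [antireg_vec n s 0 k]mxE.
rewrite (antireg_col_sum (fun k => s ^+ k + s ^+ ((2 * n).-1 - k))) /antireg_scale -mulrA mulr_sumr.
have i_lt := ltn_ord i.
rewrite (@telescope_sumr_eq _ _ _ (fun k => s ^+ (2 * n - k) - s ^+ k)); [|lia|].
  have -> : (2 * n - n = n)%N by lia.
  rewrite subrr sub0r mulrN mulrBr -!exprD opprB.
  have -> : (n + (2 * n - (n - 1 - i)) = (2 * n + 1) + i)%N by lia.
  have -> : (n + (n - 1 - i) = (2 * n).-1 - i)%N by lia.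
  by rewrite exprD s_pow mulN1r opprK addrC.
move=> k k_bound.
have -> : (2 * n - k = ((2 * n).-1 - k).+1)%N by lia.
have -> : (2 * n - k.+1 = (2 * n).-1 - k)%N by lia.
rewrite !exprS; ring.
Qed.

Lemma antireg_vec_neq0 n s : (0 < n)%N -> s != 0 -> 1 + s != 0 ->
  antireg_vec n s != 0.
Proof.
move=> n_gt0 s_neq0 s_neqN1; have last_lt : (n.-1 < n)%N by rewrite prednK.
apply/negP => /eqP /rowP /(_ (Ordinal last_lt)); rewrite !mxE /=.
have -> : ((2 * n).-1 - n.-1 = n.-1.+1)%N by lia.
rewrite exprS -[X in X + _]mul1r -mulrDl => /eqP.
by rewrite mulf_eq0 expf_eq0 (negPf s_neq0) (negPf s_neqN1) andbF.
Qed.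

Lemma eigenvalue_antireg n s : (0 < n)%N -> s ^+ (2 * n + 1) = -1 ->
  1 + s != 0 -> eigenvalue (antireg_adj n) (antireg_scale n s)^-1.
Proof.
move=> n_gt0 s_pow s_neqN1.
have s_neq0 : s != 0.
  by apply: contra_eqN s_pow => /eqP->; rewrite expr0n addn1 eq_sym oppr_eq0 oner_eq0.
have v_neq0 := antireg_vec_neq0 n_gt0 s_neq0 s_neqN1.
have vP := antireg_vecP s_pow.
have scale_neq0 : antireg_scale n s != 0.
  by apply: contra v_neq0 => /eqP scale0; rewrite -vP scale0 scale0r.
apply/eigenvalueP; exists (antireg_vec n s) => //.
by rewrite -[in RHS]vP scalerA mulVf ?scale1r.
Qed.

Lemma antireg_scale_conj n (w : algC) : w^* * w = 1 -> w ^+ (2 * n + 1) = -1 ->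
  antireg_scale n (- w ^+ 2) = (-1) ^+ n.+1 * (w + w^*).
Proof.
move=> w_unit w_pow.
have w_2n : w ^+ (2 * n) = - w^*.
  have : w ^+ (2 * n) * (w * w^*) = w ^+ (2 * n) by rewrite [w * _]mulrC w_unit mulr1.
  by rewrite mulrA -exprSr -addn1 w_pow mulN1r => <-.
rewrite /antireg_scale (exprNn (w ^+ 2)) -exprM w_2n opprK.
have w_conj : w^* * w ^+ 2 = w by rewrite expr2 mulrA w_unit mul1r.
have -> : (-1) ^+ n * - w^* * (1 + w ^+ 2) = - (-1) ^+ n * (w^* + w^* * w ^+ 2) by ring.
by rewrite w_conj exprS; ring.
Qed.

Lemma antireg_eigE n j :
  antireg_eig n j.+1 = ((-1) ^+ n.+1 * ((2 * n + 1).-root (-1) ^+ j.*2.+1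
                                        + ((2 * n + 1).-root (-1) ^+ j.*2.+1)^*))^-1.
Proof.
rewrite /antireg_eig /cos_pi_frac (_ : (2 * j.+1 - 1 = j.*2.+1)%N); last by lia.
by rewrite ReE [2 * _]mulrC divfK ?pnatr_eq0 // invfM -exprVn invrN1.
Qed.

Lemma antireg_eig_eigenvalue n j : (j < n)%N ->
  eigenvalue (antireg_adj n) (antireg_eig n j.+1).
Proof.
move=> j_lt; set m := (2 * n + 1)%N.
have m_odd : odd m by rewrite /m addn1 /= mul2n odd_double.
have m_gt1 : (1 < m)%N by rewrite /m; lia.
set w := m.-root (-1 : algC) ^+ j.*2.+1.
have w_pow : w ^+ m = -1 by rewrite exprAC rootN1K // -signr_odd /= odd_double.
have w_unit : w^* * w = 1 by rewrite -normCKC norm_rootN1X // expr1n.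
rewrite antireg_eigE -/m -/w -antireg_scale_conj //.
apply: eigenvalue_antireg; first by lia.
  by rewrite (exprNn (w ^+ 2)) -/m expN1_odd // exprAC w_pow sqrrN expr1n mulN1r.
rewrite subr_eq0 eq_sym sqrf_eq1 negb_or; apply/andP; split; apply/eqP => w_eq.
  by move: w_pow; rewrite w_eq expr1n => /eqP; rewrite -subr_eq0 opprK paddr_eq0 ?ler01 // oner_eq0.
have odd_lt : (j.*2.+1 < m <= m)%N by rewrite leqnn andbT /m; lia.
by have := Re_rootN1X_lt m_odd m_gt1 odd_lt; rewrite rootN1K // -/w w_eq ltxx.
Qed.

Lemma antireg_eig_inj n j k : (j < n)%N -> (k < n)%N ->
  antireg_eig n j.+1 = antireg_eig n k.+1 -> j = k.
Proof.
move=> j_lt k_lt; set m := (2 * n + 1)%N.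
have m_odd : odd m by rewrite /m addn1 /= mul2n odd_double.
have m_gt1 : (1 < m)%N by rewrite /m; lia.
have Re_neq i l : (i < l < n)%N ->
    reR (m.-root (-1) ^+ i.*2.+1) != reR (m.-root (-1) ^+ l.*2.+1).
  by move=> il; rewrite gt_eqF // Re_rootN1X_lt //; rewrite /m; lia.
rewrite !antireg_eigE -/m => /invr_inj /mulfI; rewrite signr_eq0 => /(_ isT) sum_eq.
have Re_eq : reR (m.-root (-1) ^+ j.*2.+1) = reR (m.-root (-1) ^+ k.*2.+1).
  by apply: val_inj; rewrite /= !ReE sum_eq.
case: (ltngtP j k) => [jk|kj|//].
- by move: (Re_neq j k); rewrite Re_eq eqxx jk k_lt => /(_ isT).
- by move: (Re_neq k j); rewrite Re_eq eqxx kj j_lt => /(_ isT).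
Qed.

Theorem mainTheorem6 (n : nat) (hn : (1 <= n)%N) :
  char_poly (antireg_adj n) = \prod_(j < n) ('X - (antireg_eig n j.+1)%:P)
  /\ (forall j : 'I_n, mup (antireg_eig n j.+1) (char_poly (antireg_adj n)) = 1%N).
Proof.
pose f (j : 'I_n) := antireg_eig n j.+1.
have f_inj : injective f.
  by move=> j k /antireg_eig_inj eq_jk; apply/val_inj/eq_jk.
have char_polyE : char_poly (antireg_adj n) = \prod_(j < n) ('X - (f j)%:P).
  by apply: char_poly_inj_eigen => // j; apply: antireg_eig_eigenvalue.
by split=> [|j]; rewrite char_polyE // (mup_prod_inj_XsubC f_inj).
Qed.
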